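(* The map $\tau_{co}:\widetilde{\mathbb{K}}_{co}\to\widetilde{\mathbb{K}}$, $[(r_\varepsilon)_\varepsilon]\mapsto[(r_\varepsilon)_\varepsilon]$, is not surjective; i.e., there exists an element of $\widetilde{\mathbb{K}}$ having no representative $(r_\varepsilon)_\varepsilon$ with $\varepsilon\mapsto r_\varepsilon$ continuous on $I$.
   Context: Let $I=(0,1]$ and $\mathbb{K}\in\{\mathbb{R},\mathbb{C}\}$. Let $\mathcal{E}_M=\{(r_\varepsilon)_\varepsilon\in\mathbb{K}^I:\exists N\in\mathbb{N}: |r_\varepsilon|=O(\varepsilon^{-N})\text{ as }\varepsilon\to0\}$ and $\mathcal{N}=\{(r_\varepsilon)_\varepsilon\in\mathbb{K}^I:\forall m\in\mathbb{N}: |r_\varepsilon|=O(\varepsilon^{m})\}$, and $\widetilde{\mathbb{K}}=\mathcal{E}_M/\mathcal{N}$. Let $\mathcal{E}_{M,co}$, $\mathcal{N}_{co}$ be the subsets of $\mathcal{E}_M$, $\mathcal{N}$ consisting of nets with $\varepsilon\mapsto r_\varepsilon$ continuous on $I$, and $\widetilde{\mathbb{K}}_{co}=\mathcal{E}_{M,co}/\mathcal{N}_{co}$. The map $\tau_{co}$ is a well-defined injective unital ring homomorphism. *)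

From Stdlib Require Import Reals.
From Coquelicot Require Import Coquelicot.
Open Scope R_scope.

(* A net (r_eps)_{eps in I}, I = (0,1], is represented by a function R -> K;
   only its values on I are ever used.  [nrm] is the absolute value / modulus
   on K and [sub] the subtraction on K. *)

Definition moderate {K : Type} (nrm : K -> R) (r : R -> K) : Prop :=
  exists N : nat, exists c eta : R, 0 < c /\ 0 < eta /\
    forall e : R, 0 < e -> e <= 1 -> e < eta -> nrm (r e) <= c * / (e ^ N).

Definition negligible {K : Type} (nrm : K -> R) (r : R -> K) : Prop :=
  forall m : nat, exists c eta : R, 0 < c /\ 0 < eta /\
    forall e : R, 0 < e -> e <= 1 -> e < eta -> nrm (r e) <= c * (e ^ m).

Definition continuous_on_I {K : Type} (nrm : K -> R) (sub : K -> K -> K)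
    (r : R -> K) : Prop :=
  forall x : R, 0 < x -> x <= 1 ->
  forall d : R, 0 < d -> exists del : R, 0 < del /\
    forall y : R, 0 < y -> y <= 1 -> Rabs (y - x) < del ->
      nrm (sub (r y) (r x)) < d.

(* tau_co : K~_co -> K~ is not surjective: some class [r] in K~ (r moderate)
   has no preimage, i.e. no moderate continuous s with r - s negligible. *)
Definition tau_co_not_surjective {K : Type} (nrm : K -> R) (sub : K -> K -> K)
  : Prop :=
  exists r : R -> K, moderate nrm r /\
    forall s : R -> K, moderate nrm s -> continuous_on_I nrm sub s ->
      ~ negligible nrm (fun e => sub (r e) (s e)).

(* The net r_e = up (1/e) (the least integer > 1/e) jumps by 1 at every e = 1/n.
   If s were continuous with |r_e - s_e| <= c e near 0, then at a jump x = 1/n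
   and a point y slightly to its right, |r x - r y| <= c x + |s x - s y| + c y
   would be < 1 for n large. For K = C one argues with the real part of s. *)
From Stdlib Require Import Reals Lra.
From Coquelicot Require Import Coquelicot.
Open Scope R_scope.

Definition up_inv (e : R) : R := IZR (up (/ e)).

Definition unit_jumps_near_0 (f : R -> R) : Prop :=
  forall eta, 0 < eta -> exists x, 0 < x < eta /\
    forall del, 0 < del -> exists y, x < y < eta /\ y - x < del /\
      1 <= Rabs (f y - f x).

Lemma unit_jumps_not_negligible_close {f s : R -> R} :
  unit_jumps_near_0 f -> continuous_on_I Rabs Rminus s ->
  ~ negligible Rabs (fun e => f e - s e).
Proof.
  intros Hjump Hs Hneg.
  destruct (Hneg 1%nat) as [c [eta [Hc [Heta Hclose]]]].
  set (eta' := Rmin (Rmin eta 1) (/ (4 * c))).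
  assert (Heta'_pos : 0 < eta').
  { apply Rmin_glb_lt; [apply Rmin_glb_lt; lra|].
    apply Rinv_0_lt_compat; lra. }
  assert (Heta'_eta : eta' <= eta) by
    (eapply Rle_trans; [apply Rmin_l | apply Rmin_l]).
  assert (Heta'_1 : eta' <= 1) by
    (eapply Rle_trans; [apply Rmin_l | apply Rmin_r]).
  assert (Hc_eta' : c * eta' <= 1 / 4).
  { replace (1 / 4) with (c * / (4 * c)) by (field; lra).
    apply Rmult_le_compat_l; [lra | apply Rmin_r]. }
  destruct (Hjump eta' Heta'_pos) as [x [[Hx Hx_eta'] Hjx]].
  destruct (Hs x Hx ltac:(lra) (1 / 4) ltac:(lra)) as [del [Hdel Hsx]].
  destruct (Hjx del Hdel) as [y [[Hxy Hy] [Hyx Hgap]]].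
  pose proof (Hclose x Hx ltac:(lra) ltac:(lra)) as Hfx.
  pose proof (Hclose y ltac:(lra) ltac:(lra) ltac:(lra)) as Hfy.
  pose proof (Hsx y ltac:(lra) ltac:(lra) ltac:(rewrite Rabs_right; lra)) as Hsy.
  simpl in Hfx, Hfy; rewrite Rmult_1_r in Hfx, Hfy.
  apply Rabs_le_between in Hfx; apply Rabs_le_between in Hfy.
  apply Rabs_lt_between in Hsy; unfold Rminus in Hsy.
  assert (c * x <= 1 / 4 /\ c * y <= 1 / 4) as [Hcx Hcy] by (split; nra).
  revert Hgap; apply Rlt_not_le; apply Rabs_def1; lra.
Qed.

Lemma up_IZR (z : Z) : up (IZR z) = (z + 1)%Z.
Proof. symmetry; apply tech_up; rewrite plus_IZR; lra. Qed.

Lemma up_IZR_sub (z : Z) (h : R) : 0 < h <= 1 -> up (IZR z - h) = z.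
Proof. intros Hh; symmetry; apply tech_up; lra. Qed.

Lemma up_inv_moderate : moderate Rabs up_inv.
Proof.
  exists 1%nat, 2, 2; split; [lra | split; [lra|]].
  intros e He0 He1 _; unfold up_inv.
  destruct (archimed (/ e)) as [Hup_gt Hup_le].
  assert (1 <= / e) by (rewrite <- Rinv_1; apply Rinv_le_contravar; lra).
  rewrite Rabs_right by lra; simpl; rewrite Rmult_1_r; lra.
Qed.

(* The jump at x = 1/n is witnessed by y = 1/(n - h): up (1/y) = n, up (1/x) = n + 1. *)
Lemma up_inv_unit_jumps : unit_jumps_near_0 up_inv.
Proof.
  intros eta Heta.
  destruct (archimed (/ eta + 2)) as [Hz _]; set (z := up (/ eta + 2)) in Hz.
  set (n := IZR z).
  assert (Hinv_eta : 0 < / eta) by (apply Rinv_0_lt_compat; lra).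
  assert (Hn_eta : / n < eta).
  { rewrite <- (Rinv_inv eta); apply Rinv_lt_contravar; unfold n in *; nra. }
  exists (/ n); split; [split; [apply Rinv_0_lt_compat; unfold n; lra | exact Hn_eta]|].
  intros del Hdel.
  set (h := Rmin (1 / 2) (del / 2)).
  assert (Hh_pos : 0 < h) by (apply Rmin_glb_lt; lra).
  assert (Hh_half : h <= 1 / 2) by apply Rmin_l.
  assert (Hh_del : h <= del / 2) by apply Rmin_r.
  exists (/ (n - h)); repeat split.
  - apply Rinv_lt_contravar; unfold n in *; nra.
  - rewrite <- (Rinv_inv eta); apply Rinv_lt_contravar; unfold n in *; nra.
  - replace (/ (n - h) - / n) with (h / (n * (n - h))) by (field; unfold n; lra).
    apply Rle_lt_trans with h; [|lra].
    apply Rmult_le_reg_r with (n * (n - h)); [unfold n; nra|].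
    unfold Rdiv; rewrite Rmult_assoc, Rinv_l by (unfold n; nra).
    apply Rmult_le_compat_l; [lra | unfold n in *; nra].
  - unfold up_inv; rewrite !Rinv_inv.
    unfold n; rewrite up_IZR, up_IZR_sub by lra; rewrite plus_IZR.
    rewrite Rabs_left by lra; lra.
Qed.

Lemma moderate_RtoC {r : R -> R} :
  moderate Rabs r -> moderate Cmod (fun e => RtoC (r e)).
Proof.
  intros [N [c [eta [Hc [Heta Hr]]]]]; exists N, c, eta.
  repeat split; auto; intros e He0 He1 Heta_e; rewrite Cmod_R; auto.
Qed.

Lemma negligible_Re {g : R -> C} :
  negligible Cmod g -> negligible Rabs (fun e => Re (g e)).
Proof.
  intros Hg m; destruct (Hg m) as [c [eta [Hc [Heta Hbound]]]].
  exists c, eta; repeat split; auto; intros e He0 He1 Heta_e.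
  eapply Rle_trans; [apply re_le_Cmod | auto].
Qed.

Lemma continuous_on_I_Re {s : R -> C} :
  continuous_on_I Cmod Cminus s -> continuous_on_I Rabs Rminus (fun e => Re (s e)).
Proof.
  intros Hs x Hx0 Hx1 d Hd; destruct (Hs x Hx0 Hx1 d Hd) as [del [Hdel Hsx]].
  exists del; split; auto; intros y Hy0 Hy1 Hyx.
  eapply Rle_lt_trans; [apply (re_le_Cmod (Cminus (s y) (s x))) | auto].
Qed.

Theorem lemma3p4 :
  tau_co_not_surjective Rabs Rminus /\ tau_co_not_surjective Cmod Cminus.
Proof.
  split.
  - exists up_inv; split; [exact up_inv_moderate|].
    intros s _ Hs.
    exact (unit_jumps_not_negligible_close up_inv_unit_jumps Hs).
  - exists (fun e => RtoC (up_inv e)); split.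
    + exact (moderate_RtoC up_inv_moderate).
    + intros s _ Hs Hneg.
      apply (unit_jumps_not_negligible_close up_inv_unit_jumps
               (continuous_on_I_Re Hs)).
      (* [Re (RtoC a - z)] reduces to [a - Re z]. *)
      exact (negligible_Re Hneg).
Qed.
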